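(* Let $H=(V,E)$ be a hypergraph, and let $L$ be a graph satisfying one of the following: (a) $\deg_H(v)\le 2$ for all $v\in V$ and $L=\mathcal L(H)$; or (b) $L=\mathcal L_2^*(H)$ and $L$ is bipartite; or (c) $L=\mathcal L_3^*(H)$. Then $H$ is eulerian whenever $L$ has a Hamilton cycle, and $H$ is quasi-eulerian whenever $L$ has a $2$-factor. Moreover, in cases (b) and (c), $H$ is quasi-eulerian whenever $L$ has a spanning subgraph each of whose connected components is $1$-regular or $2$-regular.
   Context: A hypergraph $H=(V,E)$ consists of a finite nonempty vertex set $V$, a finite edge set $E$ disjoint from $V$, and an incidence function assigning to each edge $e\in E$ a subset of $V$ (also denoted $e$); distinct edges may have the same vertex set. Hypergraphs are assumed to have no empty edges. The degree $\deg_H(v)$ is the number of edges containing $v$. A walk is a sequence $W=v_0e_1v_1e_2\cdots e_kv_k$ with $v_i\in V$, $e_i\in E$, such that for each $i$, $v_{i-1}\ne v_i$ and $v_{i-1},v_i\in e_i$; the $v_i$ are its anchors. $W$ is closed if $k\ge 2$ and $v_0=v_k$; it is a strict trail if $e_1,\dots,e_k$ are pairwise distinct. An Euler tour of $H$ is a closed strict trail traversing every edge of $H$; an Euler family of $H$ is a family of closed strict trails such that every edge of $H$ lies in exactly one trail and no two trails have a common anchor. $H$ is eulerian (quasi-eulerian) if it has an Euler tour (Euler family). The intersection graph $\mathcal L(H)$ is the simple graph with vertex set $E$ in which distinct $e,e'$ are adjacent iff $e\cap e'\ne\emptyset$; for a positive integer $\ell$, $\mathcal L_\ell^*(H)$ is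 the simple graph with vertex set $E$ in which distinct $e,e'$ are adjacent iff $|e\cap e'|\ge \ell$. *)

From mathcomp Require Import all_boot.
Set Implicit Arguments. Unset Strict Implicit. Unset Printing Implicit Defensive.

Section Hypergraph.
Variables (V E : finType) (inc : E -> {set V}).

Definition hdeg (v : V) : nat := #|[set e : E | v \in inc e]|.

(* A walk v0 e1 v1 ... ek vk is encoded by its start v0 and the sequence
   [:: (e1,v1); ...; (ek,vk)]. *)
Fixpoint is_walk (v : V) (s : seq (E * V)) : bool :=
  match s with
  | [::] => true
  | (e, w) :: s' => [&& v != w, v \in inc e, w \in inc e & is_walk w s']
  end.

Definition walk_edges (s : seq (E * V)) : seq E := map fst s.
Definition anchors (v : V) (s : seq (E * V)) : seq V := v :: map snd s.

Definition closed_strict_trail (v : V) (s : seq (E * V)) : bool :=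
  [&& is_walk v s, 2 <= size s, last v (map snd s) == v & uniq (walk_edges s)].

Definition euler_tour (v : V) (s : seq (E * V)) : Prop :=
  closed_strict_trail v s /\ forall e : E, e \in walk_edges s.

Definition eulerian : Prop := exists v s, euler_tour v s.

Definition euler_family (F : seq (V * seq (E * V))) : Prop :=
  [/\ all (fun t => closed_strict_trail t.1 t.2) F,
      forall e : E, count (fun t => e \in walk_edges t.2) F = 1
    & pairwise (fun t1 t2 => [disjoint anchors t1.1 t1.2 & anchors t2.1 t2.2]) F].

Definition quasi_eulerian : Prop := exists F, euler_family F.

Definition intersection_graph : rel E :=
  fun e f => (e != f) && (inc e :&: inc f != set0).

Definition Lstar (l : nat) : rel E :=
  fun e f => (e != f) && (l <= #|inc e :&: inc f|).
End Hypergraph.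

Section Graphs.
Variables (T : finType) (G : rel T).

Definition bipartite : Prop := exists c : T -> bool, forall x y, G x y -> c x != c y.

Definition hamiltonian : Prop :=
  exists s : seq T, [/\ uniq s, 3 <= size s, forall x, x \in s & cycle G s].

Definition spanning_subgraph (F : rel T) : Prop :=
  symmetric F /\ forall x y, F x y -> G x y.

Definition sdeg (F : rel T) (x : T) : nat := #|[set y | F x y]|.

Definition has_2factor : Prop :=
  exists F : rel T, spanning_subgraph F /\ forall x, sdeg F x = 2.

Definition has_12factor : Prop :=
  exists F : rel T, [/\ spanning_subgraph F,
    forall x, sdeg F x = 1 \/ sdeg F x = 2
  & forall x y, connect F x y -> sdeg F x = sdeg F y].
End Graphs.

From mathcomp Require Import all_boot zify.
Set Implicit Arguments. Unset Strict Implicit. Unset Printing Implicit Defensive.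

(* A cyclic sequence e_0, ..., e_(k-1) of distinct edges, consecutive ones
   meeting, is the edge sequence of a closed strict trail as soon as one can
   pick anchors v_i in e_i ∩ e_(i+1) with v_i <> v_(i+1) (indices mod k).
   In case (c) every such intersection has at least three vertices and a
   greedy choice works; in case (b) it has at least two, which suffices as the
   cycles of a bipartite graph are even; in case (a) two consecutive
   intersections are disjoint, since a common vertex would have degree 3.
   So a Hamilton cycle of L yields an Euler tour.  A spanning subgraph of L
   whose components are 1- or 2-regular splits into cycles (a K_2 component
   being the 2-cycle [e; f]); the corresponding closed trails partition E,
   and merging trails that share an anchor gives an Euler family. *)

Variant modS_spec k i : nat -> Set :=
  | ModSNext of i.+1 < k : modS_spec k i i.+1
  | ModSLast of i = k.-1 : modS_spec k i 0.

Lemma modSP k i : i < k -> modS_spec k i (i.+1 %% k).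
Proof.
move=> lt_ik; have [lt_Sk | ge_Sk] := ltnP i.+1 k.
  by rewrite modn_small //; constructor.
have [-> ->] : i = k.-1 /\ i.+1 = k by lia.
by rewrite modnn; constructor.
Qed.

Lemma modnD_neq k i d : 0 < d < k -> i < k -> (i + d) %% k != i.
Proof.
move=> /andP[d_gt0 lt_dk] lt_ik.
by rewrite -{2}(modn_small lt_ik) -{2}[i]addn0 eqn_modDl mod0n modn_small // -lt0n.
Qed.

Lemma cycle_nthP (T : Type) (r : rel T) x0 s :
  reflect (forall i, i < size s -> r (nth x0 s i) (nth x0 s (i.+1 %% size s)))
          (cycle r s).
Proof.
case: s => [|x s] /=; first by left.
have nthS i : i < (size s).+1 ->
    nth x (rcons s x) i = nth x0 (x :: s) (i.+1 %% (size s).+1).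
  case/modSP => [lt_Ss | ->].
    by rewrite nth_rcons -ltnS lt_Ss; apply: set_nth_default.
  by rewrite nth_rcons ltnn eqxx.
have nth0 i : i < (size s).+1 -> nth x (x :: rcons s x) i = nth x0 (x :: s) i.
  by rewrite -rcons_cons nth_rcons /= => lt_is; rewrite lt_is; apply: set_nth_default.
apply: (iffP (pathP x)) => r_i i; rewrite ?size_rcons => lt_is.
  by have := r_i i; rewrite size_rcons nth0 // nthS //; apply.
by rewrite nth0 // nthS //; apply: r_i.
Qed.

Section CyclicChoice.
Variable T : finType.
Implicit Types (A : {set T}) (L : nat -> {set T}).

Lemma card_gt1_neq A z : 1 < #|A| -> exists2 y, y \in A & y != z.
Proof.
case/card_gt1P => x [y [xA yA neq_xy]].
by case: (eqVneq x z) => [<- | neq_xz]; [exists y; rewrite // eq_sym | exists x].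
Qed.

Lemma card_gt2_neq A z1 z2 : 2 < #|A| -> exists y, [/\ y \in A, y != z1 & y != z2].
Proof.
move=> A_gt2; have /card_gt0P[y] : 0 < #|A :\ z1 :\ z2|.
  by move: A_gt2; rewrite (cardsD1 z1 A) (cardsD1 z2 (A :\ z1)); lia.
by rewrite !inE => /and3P[? ? ?]; exists y.
Qed.

Definition cyclic_choice k L (f : nat -> T) :=
  (forall i, i < k -> f i \in L i) /\ (forall i, i < k -> f i != f (i.+1 %% k)).

Lemma cyclic_choice_disjoint k L : 0 < k -> (forall i, i < k -> L i != set0) ->
  (forall i, i < k -> [disjoint L i & L (i.+1 %% k)]) -> exists f, cyclic_choice k L f.
Proof.
move=> k_gt0 L_neq0 L_disj; have /set0Pn[x _] := L_neq0 0 k_gt0.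
have pickP_in i : i < k -> odflt x [pick y in L i] \in L i.
  by case: pickP => [// | none] /L_neq0/set0Pn[y y_L]; have := none y; rewrite /= y_L.
exists (fun i => odflt x [pick y in L i]); split=> // i lt_ik.
apply: contraTneq (L_disj i lt_ik) => eq_f; apply/pred0Pn.
by exists (odflt x [pick y in L i]); rewrite /= pickP_in //= eq_f pickP_in ?ltn_pmod.
Qed.

Fixpoint greedy_choice L x i : T :=
  if i is i'.+1 then odflt x [pick y in L i | y != greedy_choice L x i'] else x.

Lemma greedy_choiceS L x i : 1 < #|L i.+1| ->
  greedy_choice L x i.+1 \in L i.+1 /\ greedy_choice L x i.+1 != greedy_choice L x i.
Proof.
move=> L_gt1 /=; case: pickP => [y /andP[] // | none].
have [y yL neq_y] := card_gt1_neq (greedy_choice L x i) L_gt1.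
by move: (none y); rewrite yL neq_y.
Qed.

Lemma greedy_choice_in L x k : x \in L 0 -> (forall i, 0 < i < k -> 1 < #|L i|) ->
  forall i, i < k -> greedy_choice L x i \in L i.
Proof.
move=> xL L_gt1 [//|i] lt_ik.
by case: (greedy_choiceS x (L_gt1 i.+1 lt_ik)).
Qed.

Lemma cyclic_choice_notin k L x : 0 < k -> (forall i, 0 < i < k -> 1 < #|L i|) ->
  x \in L 0 -> x \notin L k.-1 -> exists f, cyclic_choice k L f.
Proof.
move=> k_gt0 L_gt1 xL0 xNL; have f_in := greedy_choice_in xL0 L_gt1.
exists (greedy_choice L x); split=> // i /modSP[lt_Sk | ->].
  by rewrite eq_sym; case: (greedy_choiceS x (L_gt1 i.+1 lt_Sk)).
by apply: contraNneq xNL => /= <-; apply: f_in; rewrite ltn_predL.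
Qed.

(* A greedy choice, whose last value also avoids the first one. *)
Lemma cyclic_choice_card3 k L : 1 < k -> (forall i, i < k -> 2 < #|L i|) ->
  exists f, cyclic_choice k L f.
Proof.
move=> k_gt1 L_gt2; have k_gt0 : 0 < k by apply: ltnW.
have /card_gt0P[x xL0] : 0 < #|L 0| by apply: leq_ltn_trans (L_gt2 0 k_gt0).
have L_gt1 i : i < k -> 1 < #|L i| by move/L_gt2; apply: ltnW.
have f_in := greedy_choice_in xL0 (fun i ik => L_gt1 i (proj2 (andP ik))).
have lt_pk : k.-1 < k by rewrite ltn_predL.
have [y [yL neq_y neq_yx]] := card_gt2_neq (greedy_choice L x k.-2) x (L_gt2 k.-1 lt_pk).
exists (fun i => if i == k.-1 then y else greedy_choice L x i); split.
  by move=> i lt_ik; case: eqP => [-> //|_]; apply: f_in.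
move=> i /modSP[lt_Sk | ->]; last first.
  have -> : (0 == k.-1) = false by lia.
  by rewrite /= eqxx.
have -> : (i == k.-1) = false by lia.
case: (eqVneq i.+1 k.-1) => [eq_Sk | _].
  have -> : i = k.-2 by lia.
  by rewrite /= eq_sym.
by rewrite eq_sym; case: (greedy_choiceS x (L_gt1 i.+1 lt_Sk)).
Qed.

Lemma cyclic_choice_rot k m L f : m < k ->
  cyclic_choice k (fun j => L ((j + m) %% k)) f ->
  cyclic_choice k L (fun j => f ((j + (k - m)) %% k)).
Proof.
move=> lt_mk [f_in f_neq]; have k_gt0 : 0 < k by apply: leq_ltn_trans lt_mk.
have shiftK j : j < k -> ((j + (k - m)) %% k + m) %% k = j.
  by move=> lt_jk; rewrite modnDml -addnA (subnK (ltnW lt_mk)) modnDr modn_small.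
split=> j lt_jk; have lt_jmk := ltn_pmod (j + (k - m)) k_gt0.
  by have := f_in _ lt_jmk; rewrite shiftK.
have -> : (j.+1 %% k + (k - m)) %% k = ((j + (k - m)) %% k).+1 %% k.
  by rewrite -[in RHS]addn1 !modnDml addn1 addSn.
exact: f_neq.
Qed.

Lemma cyclic_chain_sub k L : (forall i, i < k -> L (i.+1 %% k) \subset L i) ->
  forall i, i < k -> L 0 \subset L i.
Proof.
move=> L_sub i; have [n] := ubnP (k - i); elim: n i => // n IH i lt_n lt_ik.
case: (modSP lt_ik) (L_sub i lt_ik) => [lt_Sk | _] sub_i //.
by apply: subset_trans sub_i; apply: IH lt_Sk; lia.
Qed.

(* If some L (i+1) is not contained in L i, a greedy choice started just after
   i with a value outside L i closes up; otherwise all the L i are equal and,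
   k being even, two of their elements can be alternated. *)
Lemma cyclic_choice_even k L : 0 < k -> ~~ odd k -> (forall i, i < k -> 1 < #|L i|) ->
  exists f, cyclic_choice k L f.
Proof.
move=> k_gt0 even_k L_gt1.
have [[i lt_ik] /= /subsetPn[x xLS xNL] | chain] :=
  pickP (fun i : 'I_k => ~~ (L (i.+1 %% k) \subset L i)).
  pose m := i.+1 %% k; have lt_mk : m < k by rewrite ltn_pmod.
  have [f choice_f] : exists f, cyclic_choice k (fun j => L ((j + m) %% k)) f.
    apply: (cyclic_choice_notin (x := x)) => //.
    - by move=> j /andP[_ lt_jk]; apply: L_gt1; rewrite ltn_pmod.
    - by rewrite add0n modn_small.
    - by rewrite modnDmr -addSnnS prednK // addnC modnDr modn_small.
  by exists (fun j => f ((j + (k - m)) %% k)); apply: cyclic_choice_rot.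
have L0_sub := @cyclic_chain_sub k L (fun i lt_ik => negbFE (chain (Ordinal lt_ik))).
have /card_gt1P[a [b [aL0 bL0 neq_ab]]] := L_gt1 0 k_gt0.
exists (fun i => if odd i then b else a); split.
  by move=> i lt_ik; case: (odd i); apply: (subsetP (L0_sub i lt_ik)).
move=> i /modSP[_ | ->]; first by rewrite /=; case: (odd i); rewrite // eq_sym.
by rewrite -subn1 oddB // (negbTE even_k) /= eq_sym.
Qed.

End CyclicChoice.

Lemma not_pairwise_perm (T : eqType) (r : rel T) s : ~~ pairwise r s ->
  exists x y s', perm_eq s [:: x, y & s'] /\ ~~ r x y.
Proof.
elim: s => [//|z s IH] /=; rewrite negb_and.
case/orP => [/allPn[y ys nr] | /IH[x [y [s' [pe nr]]]]].
  by exists z, y, (rem y s); rewrite perm_cons perm_to_rem.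
exists x, y, (z :: s'); split=> //.
by rewrite perm_sym (perm_catCA [:: x; y] [:: z] s') /= perm_cons perm_sym.
Qed.

Section Trails.
Variables (V E : finType) (inc : E -> {set V}).

(* A step only reads the anchor of the previous pair, so walks are paths of
   steps (is_walk_path) and closed walks are cycles of steps, on which
   rotation acts freely. *)
Definition walk_step : rel (E * V) :=
  fun a b => [&& a.2 != b.2, a.2 \in inc b.1 & b.2 \in inc b.1].

Definition trail_cycle (t : seq (E * V)) :=
  [&& cycle walk_step t, 1 < size t & uniq (walk_edges t)].

Definition closed_trail_edges (s : seq E) :=
  exists v t, closed_strict_trail inc v t /\ walk_edges t = s.

Lemma is_walk_path a t : is_walk inc a.2 t = path walk_step a t.
Proof.
by elim: t a => [|[e w] t IH] [e' v] //=; rewrite (IH (e, w)) /walk_step /= !andbA.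
Qed.

Lemma is_walk_cat v t1 t2 :
  is_walk inc v (t1 ++ t2) = is_walk inc v t1 && is_walk inc (last v (map snd t1)) t2.
Proof. by elim: t1 v => [|[e w] t1 IH] v //=; rewrite IH !andbA. Qed.

Lemma cycle_walk_step v t : last v (map snd t) = v -> cycle walk_step t = is_walk inc v t.
Proof.
case: t => [//|a t] closes.
have -> : v = (last a t).2 by rewrite -closes /= last_map.
by rewrite (cycle_path a) -is_walk_path.
Qed.

Lemma closed_strict_trailE v t :
  closed_strict_trail inc v t = trail_cycle t && (last v (map snd t) == v).
Proof.
rewrite /closed_strict_trail /trail_cycle.
by case: eqP => [/cycle_walk_step-> | _]; rewrite ?andbT ?andbF.
Qed.

Lemma trail_cycle_rot n t : trail_cycle (rot n t) = trail_cycle t.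
Proof. by rewrite /trail_cycle rot_cycle size_rot /walk_edges map_rot rot_uniq. Qed.

Lemma mem_walk_edges_rot n (t : seq (E * V)) e :
  (e \in walk_edges (rot n t)) = (e \in walk_edges t).
Proof. by rewrite /walk_edges map_rot mem_rot. Qed.

Lemma closed_strict_trail_rot v t w : closed_strict_trail inc v t -> w \in anchors v t ->
  exists n, closed_strict_trail inc w (rot n t).
Proof.
rewrite closed_strict_trailE in_cons => /andP[tc closes] /predU1P[-> | /mapP[a a_t ->]].
  by exists 0; rewrite rot0 closed_strict_trailE tc.
case/splitPr: a_t tc => p1 p2 tc.
exists (size p1).+1; rewrite closed_strict_trailE trail_cycle_rot tc /=.
by rewrite -cat_rcons -(size_rcons p1 a) rot_size_cat map_cat last_cat map_rcons last_rcons.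
Qed.

Lemma closed_strict_trail_cat w t1 t2 :
  closed_strict_trail inc w t1 -> closed_strict_trail inc w t2 ->
  {in walk_edges t1, forall e, e \notin walk_edges t2} ->
  closed_strict_trail inc w (t1 ++ t2).
Proof.
rewrite !closed_strict_trailE => /andP[/and3P[c1 s1 u1] /eqP l1].
move=> /andP[/and3P[c2 s2 u2] /eqP l2] dis.
have l12 : last w (map snd (t1 ++ t2)) = w by rewrite map_cat last_cat l1 l2.
rewrite l12 eqxx andbT; apply/and3P; split.
- by rewrite (cycle_walk_step l12) is_walk_cat l1 -!cycle_walk_step ?c1.
- by rewrite size_cat (leq_trans s1) ?leq_addr.
- rewrite /walk_edges map_cat cat_uniq u1 u2 andbT.
  by apply/hasPn => e e2; apply: contraL e2; apply: dis.
Qed.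

(* Two trails sharing an anchor w are rotated to close at w and concatenated,
   which decreases the number of trails. *)
Lemma quasi_eulerian_of_trails (F : seq (V * seq (E * V))) :
  all (fun t => closed_strict_trail inc t.1 t.2) F ->
  (forall e, count (fun t => e \in walk_edges t.2) F = 1) -> quasi_eulerian inc.
Proof.
have [n] := ubnP (size F); elim: n F => // n IH F lt_Fn trails partition.
have [disj | /not_pairwise_perm[[v1 t1] [[v2 t2] [F' [pF /= /pred0Pn[w /andP[w1 w2]]]]]]] :=
  boolP (pairwise (fun t1 t2 => [disjoint anchors t1.1 t1.2 & anchors t2.1 t2.2]) F).
  by exists F; split.
move: trails; rewrite (perm_all _ pF) => /and3P[c1 c2 trails'].
have count12 e : (e \in walk_edges t1) + (e \in walk_edges t2)
    + count (fun t => e \in walk_edges t.2) F' = 1.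
  by rewrite -addnA -(partition e) (permP pF).
have [n1 r1] := closed_strict_trail_rot c1 w1.
have [n2 r2] := closed_strict_trail_rot c2 w2.
have disj12 : {in walk_edges (rot n1 t1), forall e, e \notin walk_edges (rot n2 t2)}.
  move=> e; rewrite !mem_walk_edges_rot => e1; apply/negP => e2.
  by have := count12 e; rewrite e1 e2.
apply: (IH ((w, rot n1 t1 ++ rot n2 t2) :: F')).
- by move: lt_Fn; rewrite (perm_size pF) /= ltnS.
- by rewrite /= closed_strict_trail_cat.
move=> e; have := count12 e; rewrite /= /walk_edges map_cat mem_cat !map_rot !mem_rot.
by case: (e \in map fst t1); case: (e \in map fst t2).
Qed.

Lemma quasi_eulerian_of_closed_trail_edges (Cs : seq (seq E)) :
  (forall c, c \in Cs -> closed_trail_edges c) ->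
  (forall e, count (fun c => e \in c) Cs = 1) -> quasi_eulerian inc.
Proof.
move=> trails_Cs partition_Cs.
have [F [trails partition]] : exists F : seq (V * seq (E * V)),
    all (fun t => closed_strict_trail inc t.1 t.2) F /\
    forall e, count (fun t => e \in walk_edges t.2) F = count (fun c => e \in c) Cs.
  elim: Cs trails_Cs {partition_Cs} => [|c Cs IH] trails_Cs; first by exists [::].
  have [v [t [ct <-]]] := trails_Cs c (mem_head _ _).
  have [F [trails partition]] :=
    IH (fun c' Cs_c' => trails_Cs c' (mem_behead (s := c :: Cs) Cs_c')).
  by exists ((v, t) :: F); split=> [|e] /=; rewrite ?ct ?partition.
by apply: (quasi_eulerian_of_trails trails) => e; rewrite partition.
Qed.

End Trails.

Lemma bipartite_cycle_even (T : finType) (r : rel T) s :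
  bipartite r -> cycle r s -> ~~ odd (size s).
Proof.
move=> [c c_r]; have c_last x p : path r x p -> c (last x p) = c x (+) odd (size p).
  elim: p x => [|y p IH] x /=; first by rewrite addbF.
  case/andP => /c_r neq_xy /IH ->.
  by move: neq_xy; case: (c x); case: (c y); case: (odd (size p)).
case: s => [//|x s] /= /c_last; rewrite last_rcons size_rcons /=.
by case: (c x); case: (odd (size s)).
Qed.

Section EdgeCycles.
Variables (V E : finType) (inc : E -> {set V}).

Definition edge_meet e0 (s : seq E) i :=
  inc (nth e0 s i) :&: inc (nth e0 s (i.+1 %% size s)).

Lemma closed_trail_edges_of_choice e0 s f : uniq s -> 1 < size s ->
  cyclic_choice (size s) (edge_meet e0 s) f -> closed_trail_edges inc s.
Proof.
set k := size s => uniq_s k_gt1 [f_in f_neq]; have k_gt0 : 0 < k by apply: ltnW.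
pose g i := (nth e0 s i, f i); pose t := mkseq g k.
have edges_t : walk_edges t = s by rewrite /walk_edges /t /mkseq -map_comp; apply: mkseq_nth.
exists (f k.-1), t; split=> //; rewrite closed_strict_trailE; apply/andP; split.
  rewrite /trail_cycle edges_t uniq_s size_mkseq k_gt1 !andbT.
  apply/(cycle_nthP _ (g 0)) => i; rewrite size_mkseq => lt_ik.
  have lt_jk := ltn_pmod i.+1 k_gt0.
  have /setIP[fi_i fi_j] := f_in i lt_ik; have /setIP[fj_j _] := f_in _ lt_jk.
  by rewrite !nth_mkseq // /walk_step /g /= f_neq // fi_j fj_j.
have -> : t = rcons (mkseq g k.-1) (g k.-1) by rewrite /t -mkseqS prednK.
by rewrite map_rcons last_rcons.
Qed.

Lemma closed_trail_edges_meet3 s : uniq s -> 1 < size s ->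
  cycle (fun e f => 2 < #|inc e :&: inc f|) s -> closed_trail_edges inc s.
Proof.
case: s => [//|e0 s'] uniq_s s_gt1 /(cycle_nthP _ e0) meet_gt2.
have [f choice_f] := cyclic_choice_card3 (L := edge_meet e0 (e0 :: s')) s_gt1 meet_gt2.
exact: closed_trail_edges_of_choice uniq_s s_gt1 choice_f.
Qed.

Lemma closed_trail_edges_meet2 s : uniq s -> 1 < size s -> ~~ odd (size s) ->
  cycle (fun e f => 1 < #|inc e :&: inc f|) s -> closed_trail_edges inc s.
Proof.
case: s => [//|e0 s'] uniq_s s_gt1 even_s /(cycle_nthP _ e0) meet_gt1.
have [f choice_f] :=
  cyclic_choice_even (L := edge_meet e0 (e0 :: s')) (ltn0Sn _) even_s meet_gt1.
exact: closed_trail_edges_of_choice uniq_s s_gt1 choice_f.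
Qed.

Lemma closed_trail_edges_hdeg2 s : (forall v, hdeg inc v <= 2) -> uniq s -> 2 < size s ->
  cycle (fun e f => inc e :&: inc f != set0) s -> closed_trail_edges inc s.
Proof.
case: s => [//|e0 s'] hdeg_le2 uniq_s k_gt2 /(cycle_nthP _ e0) meet_neq0.
set s := e0 :: s' in uniq_s k_gt2 meet_neq0 *; set k := size s in k_gt2 meet_neq0 *.
have k_gt0 : 0 < k by apply: ltnW; apply: ltnW.
suff [f choice_f] : exists f, cyclic_choice k (edge_meet e0 s) f.
  exact: closed_trail_edges_of_choice uniq_s (ltnW k_gt2) choice_f.
apply: cyclic_choice_disjoint => // i lt_ik; set j := i.+1 %% k; set l := j.+1 %% k.
have lt_jk : j < k by rewrite ltn_pmod.
have lt_lk : l < k by rewrite ltn_pmod.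
have neq_ji : j != i by rewrite /j -addn1 modnD_neq // (ltnW k_gt2).
have neq_lj : l != j by rewrite /l -addn1 modnD_neq // (ltnW k_gt2).
have neq_li : l != i by rewrite /l /j -[(_ %% k).+1]addn1 modnDml addn1 -addn2 modnD_neq.
rewrite -setI_eq0; apply: contraT => /set0Pn[v /setIP[/setIP[v_i v_j] /setIP[_ v_l]]].
have : 2 < hdeg inc v.
  apply/card_gt2P; exists (nth e0 s i), (nth e0 s j), (nth e0 s l).
  by rewrite !inE v_i v_j v_l !nth_uniq // (eq_sym i) neq_ji (eq_sym j) neq_lj neq_li.
by rewrite ltnNge hdeg_le2.
Qed.

End EdgeCycles.

Section RegularCycles.
Variables (T : finType) (F : rel T).

Lemma maximal_path x :
  exists p, [/\ uniq (x :: p), path F x p & forall y, F (last x p) y -> y \in x :: p].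
Proof.
suff extend p : uniq (x :: p) -> path F x p ->
    exists q, [/\ uniq (x :: q), path F x q & forall y, F (last x q) y -> y \in x :: q].
  exact: (extend [::]).
have [n] := ubnP (#|T| - size p); elim: n p => // n IH p lt_pn uniq_p path_p.
case: (pickP [pred y | F (last x p) y & y \notin x :: p]) => [y /andP[Fy y_new] | maximal].
  have uniq_py : uniq (x :: rcons p y) by rewrite -rcons_cons rcons_uniq y_new.
  apply: (IH (rcons p y)) => //; last by rewrite rcons_path path_p.
  have := max_card (mem (x :: rcons p y)); rewrite (card_uniqP uniq_py) /= size_rcons => le_pT.
  rewrite -ltnS; apply: leq_trans lt_pn; rewrite ltnS ltn_sub2l //.
  exact: ltnW.
exists p; split=> // y Fy; apply: contraT => y_new.
by have := maximal y; rewrite /= Fy y_new.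
Qed.

Lemma sdeg_gt1 z a b : F z a -> F z b -> a != b -> 1 < sdeg F z.
Proof. by move=> Fa Fb neq_ab; apply/card_gt1P; exists a, b; rewrite !inE Fa Fb. Qed.

Lemma sdeg_gt2 z a b c : F z a -> F z b -> F z c ->
  [/\ a != b, b != c & c != a] -> 2 < sdeg F z.
Proof. by move=> Fa Fb Fc neq; apply/card_gt2P; exists a, b, c; rewrite !inE Fa Fb Fc. Qed.

Lemma sdeg1_eq z a b : sdeg F z = 1 -> F z a -> F z b -> a = b.
Proof.
move=> deg_z Fa Fb; case: (eqVneq a b) => // neq_ab.
by have := sdeg_gt1 Fa Fb neq_ab; rewrite deg_z.
Qed.

Lemma path_closed_sub (D : {set T}) x p :
  (forall z y, z \in D -> F z y -> y \in D) -> x \in D -> path F x p -> {subset x :: p <= D}.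
Proof.
move=> closed_D; elim: p x => [|y p IH] x x_D; first by move=> _ z; rewrite inE => /eqP->.
case/andP=> Fxy /(IH y (closed_D _ _ x_D Fxy)) sub_p z.
by rewrite in_cons => /predU1P[-> // |]; apply: sub_p.
Qed.

Hypothesis Fsym : symmetric F.

Lemma cycle_closed c z y : cycle F c -> uniq c -> 2 < size c -> sdeg F z <= 2 ->
  z \in c -> F z y -> y \in c.
Proof.
move=> cycle_c uniq_c c_gt2 deg_z /rot_to[i p rot_c] Fzy.
rewrite -(mem_rot i) rot_c; apply: contraT => y_new.
move: cycle_c uniq_c c_gt2; rewrite -(rot_cycle i) -(rot_uniq i) -(size_rot i) rot_c.
case: p {rot_c} y_new => [|a p] //; case/lastP: p => [|p b] //.
rewrite !inE !negb_or /= rcons_path last_rcons mem_rcons inE negb_or.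
move=> /and4P[_ neq_ya neq_yb _] /and3P[Fza _ Fbz] /and3P[_ a_new _] _.
have neq_ab : a != b by apply: contraNneq a_new => ->; rewrite mem_rcons mem_head.
have Fzb : F z b by rewrite Fsym.
have := sdeg_gt2 Fza Fzb Fzy; rewrite ltnNge deg_z; apply.
by split; rewrite // eq_sym.
Qed.

Lemma path_chord_sdeg x p u y : uniq (x :: rcons p u) -> path F x (rcons p u) ->
  y \in p -> y != last x p -> F u y -> 2 < sdeg F y.
Proof.
move=> uniq_p path_p y_p; case/splitPr: y_p uniq_p path_p => p1 [|z p2].
  by rewrite last_cat /= eqxx.
rewrite rcons_cat -cat_cons cat_uniq cat_path last_cat /= has_rcons.
move=> /and5P[_ /norP[_ /norP[z_old /norP[u_old _]]] _ z_new _] /and4P[_ Fwy Fyz _] _ Fuy.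
have w_old := mem_last x p1.
apply: (sdeg_gt2 (_ : F y (last x p1)) Fyz (_ : F y u)); rewrite 1?Fsym //.
split; first by apply: contraNneq z_old => <-.
  by apply: contraNneq z_new => ->; rewrite mem_rcons mem_head.
by apply: contraNneq u_old => ->.
Qed.

Hypothesis Firr : irreflexive F.
Hypothesis Fdeg : forall x, sdeg F x = 1 \/ sdeg F x = 2.
Hypothesis Fdeg_edge : forall x y, F x y -> sdeg F x = sdeg F y.

Lemma sdeg_le2 x : sdeg F x <= 2.
Proof. by case: (Fdeg x) => ->. Qed.

Lemma sdeg_path x p : path F x p -> {in p, forall z, sdeg F z = sdeg F x}.
Proof.
elim: p x => [//|y p IH] x /= /andP[Fxy path_p] z; rewrite in_cons => /predU1P[-> | z_p].
  by rewrite (Fdeg_edge Fxy).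
by rewrite (IH y) // (Fdeg_edge Fxy).
Qed.

(* A maximal path from x closes up: its last vertex has a second neighbour on
   the path, which by path_chord_sdeg can only be x. *)
Lemma sdeg2_cycle x : sdeg F x = 2 ->
  exists p, [/\ uniq (x :: p), cycle F (x :: p) & 1 < size p].
Proof.
move=> deg_x; have [q [uniq_q path_q max_q]] := maximal_path x.
have deg_q : {in x :: q, forall z, sdeg F z = 2}.
  by move=> z; rewrite in_cons => /predU1P[-> // | /(sdeg_path path_q) ->].
case/lastP: q uniq_q path_q max_q deg_q => [|p u] uniq_q path_q max_q deg_q.
  have /card_gt0P[y] : 0 < sdeg F x by rewrite deg_x.
  rewrite inE => Fxy; have := max_q y Fxy; rewrite inE => /eqP eq_yx.
  by rewrite eq_yx Firr in Fxy.
rewrite last_rcons in max_q.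
have u_gt1 : 1 < sdeg F u by rewrite deg_q // -rcons_cons mem_rcons mem_head.
have [y] := card_gt1_neq (last x p) u_gt1.
rewrite inE => Fuy neq_y; have := max_q y Fuy.
rewrite -rcons_cons mem_rcons !in_cons => /predU1P[eq_yu | /predU1P[eq_yx | y_p]].
- by rewrite eq_yu Firr in Fuy.
- exists (rcons p u); split=> //; first by rewrite /= rcons_path path_q last_rcons -eq_yx.
  rewrite size_rcons ltnS lt0n; apply: contraNneq neq_y => /size0nil ->.
  by rewrite eq_yx.
- by have := path_chord_sdeg uniq_q path_q y_p neq_y Fuy; rewrite ltnNge sdeg_le2.
Qed.

(* The cycle of a 1-regular component is a 2-cycle [x; y]; that of a
   2-regular component has length at least 3. *)
Definition factor_cycle c :=
  [/\ uniq c, cycle F c, 1 < size c & {in c, forall z, sdeg F z = 2} -> 2 < size c].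

Lemma component_cycle x : exists p,
  factor_cycle (x :: p) /\ forall z y, z \in x :: p -> F z y -> y \in x :: p.
Proof.
case: (Fdeg x) => deg_x; last first.
  have [p [uniq_p cycle_p p_gt1]] := sdeg2_cycle deg_x.
  exists p; split; first by split=> //; apply: leqW.
  by move=> z y z_p; apply: cycle_closed; rewrite ?sdeg_le2 //= ltnS.
have /card_gt0P[y] : 0 < sdeg F x by rewrite deg_x.
rewrite inE => Fxy; have deg_y : sdeg F y = 1 by rewrite -(Fdeg_edge Fxy).
have Fyx : F y x by rewrite Fsym.
exists [:: y]; split.
  split=> //=; last by move/(_ x (mem_head _ _)); rewrite deg_x.
    by rewrite inE andbT; apply: contraTneq Fxy => ->; rewrite Firr.
  by rewrite Fxy Fyx.
move=> z w; rewrite !inE => /orP[] /eqP-> Fzw.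
  by rewrite (sdeg1_eq deg_x Fzw Fxy) eqxx orbT.
by rewrite (sdeg1_eq deg_y Fzw Fyx) eqxx.
Qed.

Lemma factor_cycle_partition_in (D : {set T}) :
  (forall z y, z \in D -> F z y -> y \in D) ->
  exists Cs, (forall c, c \in Cs -> factor_cycle c) /\
             forall z, count (fun c => z \in c) Cs = (z \in D).
Proof.
have [n] := ubnP #|D|; elim: n D => // n IH D lt_Dn closed_D.
have [-> | [x x_D]] := set_0Vmem D; first by exists [::]; split=> // z; rewrite inE.
have [p [fc_p closed_p]] := component_cycle x.
have sub_p : {subset x :: p <= D}.
  case: fc_p => _ /= + _ _; rewrite rcons_path => /andP[path_p _].
  exact: path_closed_sub closed_D x_D path_p.
pose D' := D :\: [set z in x :: p].
have closed_D' z y : z \in D' -> F z y -> y \in D'.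
  rewrite !in_setD !in_set => /andP[z_new z_D] Fzy; rewrite (closed_D _ _ z_D Fzy) andbT.
  by apply: contra z_new => y_p; apply: closed_p y_p _; rewrite Fsym.
have lt_D'n : #|D'| < n.
  rewrite -ltnS; apply: (leq_trans _ lt_Dn); rewrite ltnS.
  apply: proper_card; apply/properP; split; first exact: subsetDl.
  by exists x; rewrite // in_setD in_set mem_head.
have [Cs [fc_Cs count_Cs]] := IH D' lt_D'n closed_D'.
exists ((x :: p) :: Cs); split=> [c | z].
  by rewrite in_cons => /predU1P[-> // | /fc_Cs].
rewrite /= count_Cs in_setD in_set.
by case: (boolP (z \in x :: p)) => [/sub_p -> | _]; rewrite ?andbF ?andbT.
Qed.

Lemma factor_cycle_partition :
  exists Cs, (forall c, c \in Cs -> factor_cycle c) /\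
             forall z, count (fun c => z \in c) Cs = 1.
Proof.
have [Cs [fc_Cs count_Cs]] :=
  @factor_cycle_partition_in [set: T] (fun _ y _ _ => in_setT y).
by exists Cs; split=> // z; rewrite count_Cs in_setT.
Qed.

End RegularCycles.

Lemma quasi_eulerian_of_factor (V E : finType) (inc : E -> {set V}) (L F : rel E) :
  irreflexive L -> spanning_subgraph L F ->
  (forall e, sdeg F e = 1 \/ sdeg F e = 2) -> (forall e f, F e f -> sdeg F e = sdeg F f) ->
  (forall c, uniq c -> 1 < size c -> ({in c, forall e, sdeg F e = 2} -> 2 < size c) ->
     cycle L c -> closed_trail_edges inc c) ->
  quasi_eulerian inc.
Proof.
move=> L_irr [Fsym F_L] Fdeg Fdeg_edge trails.
have F_irr : irreflexive F by move=> e; apply/negP => /F_L; rewrite L_irr.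
have [Cs [fc_Cs partition]] := factor_cycle_partition Fsym F_irr Fdeg Fdeg_edge.
apply: (quasi_eulerian_of_closed_trail_edges (Cs := Cs)) => // c.
by case/fc_Cs => uniq_c cycle_c c_gt1 c_gt2; apply: trails (sub_cycle F_L cycle_c).
Qed.

Unset Implicit Arguments.

Theorem theorem2p14 (V E : finType) (inc : E -> {set V})
  (HV : 0 < #|V|) (Hne : forall e : E, inc e != set0) (L : rel E) :
  let case_a := (forall v : V, hdeg inc v <= 2) /\ L =2 intersection_graph inc in
  let case_b := L =2 Lstar inc 2 /\ bipartite L in
  let case_c := L =2 Lstar inc 3 in
  case_a \/ case_b \/ case_c ->
  [/\ (hamiltonian L -> eulerian inc),
      (has_2factor L -> quasi_eulerian inc)
    & (case_b \/ case_c -> has_12factor L -> quasi_eulerian inc)].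
Proof.
move=> case_a case_b case_c cases.
have L_irr : irreflexive L.
  by move=> e; case: cases => [[_ ->] | [[-> _] | ->]]; rewrite /intersection_graph /Lstar eqxx.
have trail_bc : case_b \/ case_c ->
    forall c, uniq c -> 1 < size c -> cycle L c -> closed_trail_edges inc c.
  move=> [[L_2 bip] | L_3] c uniq_c c_gt1 cycle_c.
    apply: closed_trail_edges_meet2 (bipartite_cycle_even bip cycle_c) _ => //.
    by apply: sub_cycle cycle_c => e f; rewrite L_2 => /andP[].
  apply: closed_trail_edges_meet3 => //.
  by apply: sub_cycle cycle_c => e f; rewrite L_3 => /andP[].
have trail_abc c : uniq c -> 2 < size c -> cycle L c -> closed_trail_edges inc c.
  case: cases => [[hdeg_le2 L_a] | bc] uniq_c c_gt2 cycle_c.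
    apply: closed_trail_edges_hdeg2 => //.
    by apply: sub_cycle cycle_c => e f; rewrite L_a => /andP[].
  exact: trail_bc (ltnW c_gt2) _.
split.
- move=> [s [uniq_s s_gt2 all_s /(trail_abc s uniq_s s_gt2)[v [t [trail_t edges_t]]]]].
  by exists v, t; split=> // e; rewrite edges_t.
- move=> [F [F_sub deg_F]].
  apply: (quasi_eulerian_of_factor L_irr F_sub) => [e | e f _ | c uniq_c _ c_gt2].
  + by rewrite deg_F; right.
  + by rewrite !deg_F.
  + by apply: trail_abc uniq_c (c_gt2 _) => e _.
move=> bc [F [F_sub deg_F comp_F]].
apply: (quasi_eulerian_of_factor L_irr F_sub) => // [e f Fef | c uniq_c c_gt1 _].
- exact/comp_F/connect1.
- exact: trail_bc.
Qed.
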